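(* For every $n\in\mathbb{N}^+$ there is a 2-layer MLP with ReGLU activation, $f(x) = W_2[(W_1x+b_1)\otimes\operatorname{ReLU}(Vx+b_2)]+b$, such that for all $x = [x_1;x_2]\in\mathbb{R}^{2n}$ with $x_1,x_2\in\mathbb{R}^n$, $f(x) = x_1\otimes x_2$.
   Context: $\otimes$ denotes elementwise multiplication, $\operatorname{ReLU}$ is applied elementwise, and $[x_1;x_2]$ denotes concatenation. *)

From HB Require Import structures.
From mathcomp Require Import all_boot all_order all_algebra.
From mathcomp Require Import reals.
Set Implicit Arguments. Unset Strict Implicit. Unset Printing Implicit Defensive.
Import Order.TTheory GRing.Theory Num.Theory.
Local Open Scope ring_scope.

Definition relu_v (R : realType) (k : nat) (v : 'cV[R]_k) : 'cV[R]_k :=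
  map_mx (fun a => Num.max a 0) v.

Definition hadamard (R : realType) (k : nat) (u v : 'cV[R]_k) : 'cV[R]_k :=
  map2_mx (fun a b => a * b) u v.

Definition reglu_mlp (R : realType) (d m p : nat)
  (W1 : 'M[R]_(m, d)) (b1 : 'cV[R]_m) (V : 'M[R]_(m, d)) (b2 : 'cV[R]_m)
  (W2 : 'M[R]_(p, m)) (b : 'cV[R]_p) (x : 'cV[R]_d) : 'cV[R]_p :=
  W2 *m hadamard (W1 *m x + b1) (relu_v (V *m x + b2)) + b.

From HB Require Import structures.
From mathcomp Require Import all_boot all_order all_algebra.
From mathcomp Require Import reals.

Import Order.TTheory GRing.Theory Num.Theory.
Local Open Scope ring_scope.

(* Since [y = ReLU y - ReLU (- y)], two hidden units per coordinate, both with
   gate value [x1 i] and with pre-activations [x2 i] and [- x2 i], combined with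
   output weights [1] and [-1], compute [x1 i * x2 i] exactly. *)

Lemma max0_subN (R : realDomainType) (a : R) : Num.max a 0 - Num.max (- a) 0 = a.
Proof. by rewrite oppr_max opprK oppr0 addr_max_min addr0. Qed.

Section ReGLU.
Set Implicit Arguments.
Unset Strict Implicit.
Variable R : realType.

Lemma relu_vB_reluN (k : nat) (v : 'cV[R]_k) : relu_v v - relu_v (- v) = v.
Proof. by apply/matrixP => i j; rewrite !mxE max0_subN. Qed.

Lemma hadamardBr (k : nat) (u v w : 'cV[R]_k) :
  hadamard u (v - w) = hadamard u v - hadamard u w.
Proof. by apply/matrixP => i j; rewrite !mxE mulrBr. Qed.

Lemma hadamard_col_mx (k l : nat) (a b : 'cV[R]_k) (c d : 'cV[R]_l) :
  hadamard (col_mx a c) (col_mx b d) = col_mx (hadamard a b) (hadamard c d).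
Proof. by apply/matrixP => i j; rewrite !mxE; case: splitP => i' _; rewrite !mxE. Qed.

Lemma relu_v_col_mx (k l : nat) (a : 'cV[R]_k) (c : 'cV[R]_l) :
  relu_v (col_mx a c) = col_mx (relu_v a) (relu_v c).
Proof. by apply/matrixP => i j; rewrite !mxE; case: splitP => i' _; rewrite !mxE. Qed.

End ReGLU.

Theorem mainTheorem7 (R : realType) (n : nat) (hn : (0 < n)%N) :
  exists (m : nat) (W1 : 'M[R]_(m, n + n)) (b1 : 'cV[R]_m)
         (V : 'M[R]_(m, n + n)) (b2 : 'cV[R]_m)
         (W2 : 'M[R]_(n, m)) (b : 'cV[R]_n),
    forall x1 x2 : 'cV[R]_n,
      reglu_mlp W1 b1 V b2 W2 b (col_mx x1 x2) = hadamard x1 x2.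
Proof.
exists (n + n)%N, (col_mx (row_mx 1%:M 0) (row_mx 1%:M 0)), 0,
  (col_mx (row_mx 0 1%:M) (row_mx 0 (- 1%:M))), 0, (row_mx 1%:M (- 1%:M)), 0.
move=> x1 x2; rewrite /reglu_mlp !addr0 !mul_col_mx !mul_row_col.
rewrite !mul0mx !add0r !addr0 !mulNmx !mul1mx.
rewrite relu_v_col_mx hadamard_col_mx mul_row_col mulNmx !mul1mx.
by rewrite -hadamardBr (relu_vB_reluN x2).
Qed.
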